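(* Let $\mathcal{H}_O\simeq\mathbb{C}^{d_O}$ and $\mathcal{H}_R\simeq\mathbb{C}^{d_R}$. Let $H_R=\sum_{m=1}^{d_R}\lambda_m^{\uparrow}|\xi_m\rangle\langle\xi_m|$ with $\lambda_1^\uparrow\leqslant\dots\leqslant\lambda_{d_R}^\uparrow$ and $\{|\xi_m\rangle\}$ an orthonormal basis of $\mathcal{H}_R$; let $\beta\in(0,\infty)$ and $\rho_R(\beta)=e^{-\beta H_R}/\mathrm{tr}[e^{-\beta H_R}]=\sum_m r_m^{\downarrow}|\xi_m\rangle\langle\xi_m|$. Let $\rho_O=\sum_{l=1}^{d_O}o_l^{\downarrow}|\varphi_l\rangle\langle\varphi_l|$ be a density operator on $\mathcal{H}_O$ with $o_1^\downarrow\geqslant\dots\geqslant o_{d_O}^\downarrow$ and $\{|\varphi_l\rangle\}$ an orthonormal basis. Write $\rho=\rho_O\otimes\rho_R(\beta)=\sum_{n=1}^{d_Od_R}p_n^{\downarrow}|\psi_n\rangle\langle\psi_n|$, where $(p_n^\downarrow)_n$ is the non-increasing rearrangement of $(o_l^\downarrow r_m^\downarrow)_{l,m}$ and $(|\psi_n\rangle)_n$ the correspondingly rearranged family $(|\varphi_l\rangle\otimes|\xi_m\rangle)_{l,m}$. For a unitary $U$ on $\mathcal{H}_O\otimes\mathcal{H}_R$ let $\rho_O'=\mathrm{tr}_R[U\rho U^\dagger]$ and $p(\varphi_1|\rho_O')=\langle\varphi_1|\rho_O'|\varphi_1\rangle$. Then $$\max_{U}\, p(\varphi_1|\rho_O')=p_{\varphi_1}^{\max}:=\sum_{m=1}^{d_R}p_m^{\downarrow},$$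 and this maximum is attained by every unitary $U$ for which there is an orthonormal basis $\{|\xi_m'\rangle\}_{m=1}^{d_R}$ of $\mathcal{H}_R$ with $U|\psi_m\rangle=|\varphi_1\rangle\otimes|\xi_m'\rangle$ for all $m\in\{1,\dots,d_R\}$.
   Context: The maximum is over all unitary operators on $\mathcal{H}_O\otimes\mathcal{H}_R$; $\mathrm{tr}_R$ denotes the partial trace over $\mathcal{H}_R$. *)

From HB Require Import structures.
From mathcomp Require Import all_boot all_order all_algebra.
From mathcomp.real_closed Require Import complex mxtens.
From mathcomp Require Import reals.
From mathcomp Require Import sequences exp.
Set Implicit Arguments. Unset Strict Implicit. Unset Printing Implicit Defensive.
Import Order.TTheory GRing.Theory Num.Theory.
Local Open Scope ring_scope.

Definition mxadj (R : rcfType) m n (A : 'M[R[i]]_(m, n)) : 'M[R[i]]_(n, m) :=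
  (map_mx (@conjc R) A)^T.

Definition unitary (R : rcfType) n (U : 'M[R[i]]_n) : Prop :=
  mxadj U *m U = 1%:M /\ U *m mxadj U = 1%:M.

Definition onb (R : rcfType) d (v : 'I_d -> 'cV[R[i]]_d) : Prop :=
  forall j k, mxadj (v j) *m v k = ((j == k)%:R)%:M.

Definition proj (R : rcfType) n (v : 'cV[R[i]]_n) : 'M[R[i]]_n := v *m mxadj v.

(* partial trace over the second factor H_R of H_O (x) H_R = C^(dO*dR),
   consistent with the index convention of the Kronecker product *t *)
Definition ptraceR (R : rcfType) dO dR (A : 'M[R[i]]_(dO * dR)) : 'M[R[i]]_dO :=
  \matrix_(j, k) \sum_(m < dR) A (mxtens_index (j, m)) (mxtens_index (k, m)).

Definition gibbs_weight (R : realType) dR (lam : 'I_dR -> R) (beta : R) (m : 'I_dR) : R :=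
  expR (- beta * lam m) / \sum_(k < dR) expR (- beta * lam k).

Definition hamR (R : realType) dR (lam : 'I_dR -> R) (xi : 'I_dR -> 'cV[R[i]]_dR)
  : 'M[R[i]]_dR := \sum_(m < dR) real_complex R (lam m) *: proj (xi m).

(* rho_R(beta) = e^{-beta H_R}/tr e^{-beta H_R}, written in the eigenbasis of H_R *)
Definition thermal (R : realType) dR (lam : 'I_dR -> R) (xi : 'I_dR -> 'cV[R[i]]_dR)
  (beta : R) : 'M[R[i]]_dR :=
  \sum_(m < dR) real_complex R (gibbs_weight lam beta m) *: proj (xi m).

Definition stateO (R : realType) dO (o : 'I_dO -> R) (phi : 'I_dO -> 'cV[R[i]]_dO)
  : 'M[R[i]]_dO := \sum_(l < dO) real_complex R (o l) *: proj (phi l).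

From HB Require Import structures.
From mathcomp Require Import all_boot all_order all_algebra.
From mathcomp.real_closed Require Import complex mxtens.
From mathcomp Require Import reals.
From mathcomp Require Import sequences exp.
From mathcomp Require Import ring.
Import Order.TTheory GRing.Theory Num.Theory.
Set Implicit Arguments. Unset Strict Implicit. Unset Printing Implicit Defensive.
Local Open Scope ring_scope.

(* For a pure state x, <phi1| tr_R |x><x| |phi1> is
   the squared length [pop phi1 x] of the projection of x onto the dR-dimensional subspace
   phi1 (x) H_R.  Hence p(phi1|rho_O') = \sum_n p_n q_n with q_n = pop phi1 (U psi_n), where
   0 <= q_n <= 1 and \sum_n q_n = dR because (U psi_n)_n is again an orthonormal basis.
   Since p is nonincreasing, such a weighted sum is at most the sum of the dR largest p_n,
   with equality as soon as q_n = 1 for n < dR (bathtub principle); this is the case when U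
   maps psi_1, ..., psi_dR into phi1 (x) H_R. *)

Section Bathtub.
Variable R : numDomainType.

Lemma sum1_ord_lt N k : (k <= N)%N -> \sum_(n < N | (n < k)%N) (1 : R) = k%:R.
Proof. by move=> kN; rewrite -(big_ord_widen N (fun _ => 1 : R)) // sumr_const card_ord. Qed.

Lemma bathtub_le N k (P q : 'I_N -> R) :
  (0 < k <= N)%N -> (forall n n' : 'I_N, (n <= n')%N -> P n' <= P n) ->
  (forall n, 0 <= q n <= 1) -> \sum_n q n = k%:R ->
  \sum_n P n * q n <= \sum_(n < N | (n < k)%N) P n.
Proof.
case/andP=> k_gt0 kN P_noninc q01 sum_q.
have k1N : (k.-1 < N)%N by rewrite prednK.
pose t := P (Ordinal k1N). (* separates the k largest terms from the others *)
have P_bound n : P n * q n <=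
    (if (n < k)%N then P n else 0) + t * (q n - (if (n < k)%N then 1 else 0)).
  have /andP[q0 q1] := q01 n; rewrite -subr_ge0; case: ltnP => [n_lt_k | k_le_n].
    have -> : P n + t * (q n - 1) - P n * q n = (P n - t) * (1 - q n) by ring.
    by rewrite mulr_ge0 // subr_ge0 // P_noninc // -ltnS prednK.
  have -> : 0 + t * (q n - 0) - P n * q n = (t - P n) * q n by ring.
  by rewrite mulr_ge0 // subr_ge0 P_noninc // (leq_trans _ k_le_n) // leq_pred.
apply: (le_trans (ler_sum _ (fun n _ => P_bound n))).
rewrite big_split /= -mulr_sumr sumrB sum_q -!big_mkcond /= sum1_ord_lt //.
by rewrite subrr mulr0 addr0.
Qed.

Lemma bathtub_eq N k (P q : 'I_N -> R) :
  (k <= N)%N -> (forall n, 0 <= q n) -> \sum_n q n = k%:R ->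
  (forall n : 'I_N, (n < k)%N -> q n = 1) ->
  \sum_n P n * q n = \sum_(n < N | (n < k)%N) P n.
Proof.
move=> kN q0 sum_q q1.
have sum_q_tail : \sum_(n < N | ~~ (n < k)%N) q n = 0.
  apply: (@addrI _ k%:R); rewrite addr0 -{2}sum_q [RHS](bigID (fun n : 'I_N => (n < k)%N)) /=.
  by rewrite (eq_bigr _ q1) sum1_ord_lt.
have q_tail := psumr_eq0P (fun n _ => q0 n) sum_q_tail.
rewrite (bigID (fun n : 'I_N => (n < k)%N)) /= [X in _ + X]big1 ?addr0.
  by apply: eq_bigr => n /q1 ->; rewrite mulr1.
by move=> n /q_tail ->; rewrite mulr0.
Qed.

End Bathtub.

Section Tensor.
Variable R : comPzRingType.

Lemma tensmx_sum (I J : finType) m n p q (F : I -> 'M[R]_(m, n)) (G : J -> 'M[R]_(p, q)) :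
  (\sum_i F i) *t (\sum_j G j) = \sum_i \sum_j F i *t G j.
Proof.
apply/matrixP => a b; rewrite mxE !summxE big_distrlr /=.
by apply: eq_bigr => i _; rewrite summxE; apply: eq_bigr => j _; rewrite !mxE.
Qed.

Lemma tensmxZ m n p q (a b : R) (A : 'M[R]_(m, n)) (B : 'M[R]_(p, q)) :
  (a *: A) *t (b *: B) = (a * b) *: (A *t B).
Proof. by apply/matrixP => i j; rewrite !mxE mulrACA. Qed.

End Tensor.

Section Hilbert.
Variable R : rcfType.
Local Notation C := R[i].

Lemma mxadjE m n (A : 'M[C]_(m, n)) i j : mxadj A i j = (A j i)^*%C.
Proof. by rewrite !mxE. Qed.

Lemma mxadjM m n p (A : 'M[C]_(m, n)) (B : 'M[C]_(n, p)) :
  mxadj (A *m B) = mxadj B *m mxadj A.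
Proof. by rewrite /mxadj map_mxM trmx_mul. Qed.

Lemma mxadjK m n (A : 'M[C]_(m, n)) : mxadj (mxadj A) = A.
Proof. by apply/matrixP=> i j; rewrite !mxadjE conjcK. Qed.

Lemma mxadj_tens m n p q (A : 'M[C]_(m, n)) (B : 'M[C]_(p, q)) :
  mxadj (A *t B) = mxadj A *t mxadj B.
Proof. by rewrite /mxadj map_mxT trmx_tens. Qed.

Lemma conjcM (x y : C) : (x * y)^*%C = x^*%C * y^*%C.
Proof. by case: (@conjc_is_multiplicative R) => ->. Qed.

Lemma conjc_sum I (r : seq I) (P : pred I) (F : I -> C) :
  (\sum_(i <- r | P i) F i)^*%C = \sum_(i <- r | P i) (F i)^*%C.
Proof. exact: rmorph_sum. Qed.

Definition dotv n (x y : 'cV[C]_n) : C := (mxadj x *m y) 0 0.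

Lemma dotvE n (x y : 'cV[C]_n) : dotv x y = \sum_i (x i 0)^*%C * y i 0.
Proof. by rewrite /dotv mxE; apply: eq_bigr => i _; rewrite mxadjE. Qed.

Lemma dotvv n (x : 'cV[C]_n) : dotv x x = \sum_i `|x i 0| ^+ 2.
Proof. by rewrite dotvE; apply: eq_bigr => i _; rewrite sqr_normc mulrC. Qed.

Lemma dotvC n (x y : 'cV[C]_n) : dotv y x = (dotv x y)^*%C.
Proof. by rewrite /dotv -mxadjE mxadjM mxadjK. Qed.

Lemma dotv_mulmx n m (A : 'M[C]_(n, m)) x y : dotv x (A *m y) = dotv (mxadj A *m x) y.
Proof. by rewrite /dotv mxadjM mxadjK mulmxA. Qed.

Lemma dotv_sumr n I (r : seq I) (c : I -> C) x (y : I -> 'cV[C]_n) :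
  dotv x (\sum_(i <- r) c i *: y i) = \sum_(i <- r) c i * dotv x (y i).
Proof.
rewrite /dotv mulmx_sumr summxE; apply: eq_bigr => i _.
by rewrite -scalemxAr mxE.
Qed.

Lemma dotv_delta n (k : 'I_n) (x : 'cV[C]_n) : dotv (delta_mx k 0) x = x k 0.
Proof.
rewrite dotvE (bigD1 k) //= big1 => [|i /negbTE ik]; first by rewrite !mxE !eqxx conjc1 mul1r addr0.
by rewrite mxE ik conjc0 mul0r.
Qed.

Lemma dotv_tens m n (a a' : 'cV[C]_m) (b b' : 'cV[C]_n) :
  dotv (a *t b) (a' *t b') = dotv a a' * dotv b b'.
Proof.
(* [a *t b] has width [1 * 1], which [dotv] only sees up to conversion. *)
change ((mxadj (a *t b) *m (a' *t b')) 0 0 = dotv a a' * dotv b b').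
rewrite mxadj_tens tensmx_mul mxE.
by congr (_ * _); congr (_ _ _); apply: val_inj; rewrite /= ?div0n ?mod0n.
Qed.

Lemma onbP d (v : 'I_d -> 'cV[C]_d) :
  onb v <-> forall j k, dotv (v j) (v k) = (j == k)%:R.
Proof.
split=> [v_onb j k | v_dot j k]; first by rewrite /dotv v_onb mxE eqxx.
by rewrite [LHS]mx11_scalar -[_ 0 0]/(dotv (v j) (v k)) v_dot.
Qed.

Lemma onb_delta d : onb (fun k : 'I_d => (delta_mx k 0 : 'cV[C]_d)).
Proof.
apply/onbP => j k; rewrite dotvE (bigD1 j) //= big1 => [|i /negbTE ji].
  by rewrite !mxE !eqxx conjc1 mul1r addr0 andbT eq_sym.
by rewrite mxE ji conjc0 mul0r.
Qed.

Lemma onb_tens_reindex dO dR (u : 'I_dO -> 'cV[C]_dO) (v : 'I_dR -> 'cV[C]_dR)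
    (sigma : 'I_(dO * dR) -> 'I_dO * 'I_dR) :
  onb u -> onb v -> bijective sigma ->
  onb (fun n => u (sigma n).1 *t v (sigma n).2).
Proof.
move=> /onbP u_onb /onbP v_onb /bij_inj sigma_inj; apply/onbP => n n'.
rewrite dotv_tens u_onb v_onb -natrM mulnb -xpair_eqE -!surjective_pairing.
by rewrite (inj_eq sigma_inj).
Qed.

Definition mx_of_cols n k (f : 'I_k -> 'cV[C]_n) : 'M[C]_(n, k) := \matrix_(i, c) f c i 0.

Lemma mx_of_cols_delta n k (f : 'I_k -> 'cV[C]_n) c : mx_of_cols f *m delta_mx c 0 = f c.
Proof. by rewrite -colE; apply/matrixP=> i j; rewrite !mxE ord1. Qed.

Lemma mxadj_mx_of_cols n k (f : 'I_k -> 'cV[C]_n) x c :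
  (mxadj (mx_of_cols f) *m x) c 0 = dotv (f c) x.
Proof. by rewrite dotvE mxE; apply: eq_bigr => i _; rewrite !mxE. Qed.

Lemma onb_unitary d (f : 'I_d -> 'cV[C]_d) : onb f -> unitary (mx_of_cols f).
Proof.
move=> /onbP f_onb.
suff adjWW : mxadj (mx_of_cols f) *m mx_of_cols f = 1%:M by split=> //; apply: mulmx1C.
apply/matrixP => c c'; move: (f_onb c c'); rewrite dotvE !mxE => <-.
by apply: eq_bigr => i _; rewrite !mxE.
Qed.

Lemma unitaryM n (U V : 'M[C]_n) : unitary U -> unitary V -> unitary (U *m V).
Proof.
move=> [U1 U2] [V1 V2]; rewrite /unitary mxadjM.
by rewrite !mulmxA -!(mulmxA _ _ U) -!(mulmxA _ _ (mxadj V)) U1 V2 !mulmx1.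
Qed.

Lemma unitary_adj n (U : 'M[C]_n) : unitary U -> unitary (mxadj U).
Proof. by move=> [U1 U2]; rewrite /unitary mxadjK. Qed.

Lemma unitary_onb_map d (f g : 'I_d -> 'cV[C]_d) : onb f -> onb g ->
  exists2 U, unitary U & forall n, U *m f n = g n.
Proof.
move=> f_onb g_onb; have [F1 _] := onb_unitary f_onb.
exists (mx_of_cols g *m mxadj (mx_of_cols f)).
  by apply: unitaryM; [exact: onb_unitary | apply/unitary_adj/onb_unitary].
move=> n; rewrite -(mx_of_cols_delta f) !mulmxA -(mulmxA _ _ (mx_of_cols f)) F1 mulmx1.
exact: mx_of_cols_delta.
Qed.

Lemma dotv_unitary n (U : 'M[C]_n) x y : unitary U -> dotv (U *m x) (U *m y) = dotv x y.
Proof. by case=> U1 _; rewrite dotv_mulmx mulmxA U1 mul1mx. Qed.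

Lemma parseval d (f : 'I_d -> 'cV[C]_d) x : onb f ->
  \sum_c `|dotv (f c) x| ^+ 2 = dotv x x.
Proof.
move=> /onb_unitary/unitary_adj W_unitary.
rewrite -(dotv_unitary x x W_unitary) dotvv.
by apply: eq_bigr => c _; rewrite mxadj_mx_of_cols.
Qed.

Lemma projE n (x : 'cV[C]_n) i j : proj x i j = x i 0 * (x j 0)^*%C.
Proof. by rewrite /proj mxE big_ord1 mxadjE. Qed.

Lemma proj_mulmx n (U : 'M[C]_n) x : U *m proj x *m mxadj U = proj (U *m x).
Proof. by rewrite /proj mxadjM !mulmxA. Qed.

Lemma proj_tens m n (u : 'cV[C]_m) (v : 'cV[C]_n) : proj (u *t v) = proj u *t proj v.
Proof. by rewrite /proj -tensmx_mul -mxadj_tens. Qed.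

End Hilbert.

Lemma sum_mxtens_index (V : nmodType) m n (F : 'I_(m * n) -> V) :
  \sum_k F k = \sum_(i < m) \sum_(j < n) F (mxtens_index (i, j)).
Proof.
rewrite pair_big /= (reindex (@mxtens_index m n)) //=.
  by apply: eq_bigr => -[i j].
by exists (@mxtens_unindex m n) => k _; rewrite (mxtens_indexK, mxtens_unindexK).
Qed.

Lemma mxtens_unindex_bij m n : bijective (@mxtens_unindex m n).
Proof. by exists (@mxtens_index m n); [exact: mxtens_unindexK | exact: mxtens_indexK]. Qed.

Lemma mxtens_unindex0 m n (i : 'I_m) (j : 'I_n) (k : 'I_(m * n)) :
  i = 0%N :> nat -> k = j :> nat -> mxtens_unindex k = (i, j).
Proof.
move=> i0 kj; rewrite -(mxtens_indexK (i, j)); congr mxtens_unindex.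
by apply: val_inj; rewrite /= i0 kj.
Qed.

Section Marginal.
Variables (R : rcfType) (dO dR : nat).
Local Notation C := R[i].
Local Notation N := (dO * dR)%N.

Lemma tens_colE (x : 'cV[C]_dO) (y : 'cV[C]_dR) i j :
  (x *t y) (mxtens_index (i, j)) 0 = x i 0 * y j 0.
Proof.
rewrite mxE mxtens_indexK /=.
by congr (x _ _ * y _ _); apply: val_inj; rewrite /= ?div0n ?mod0n.
Qed.

Lemma dotv_tens_delta (a : 'cV[C]_dO) (k : 'I_dR) (x : 'cV[C]_N) :
  dotv (a *t (delta_mx k 0 : 'cV[C]_dR)) x = \sum_j (a j 0)^*%C * x (mxtens_index (j, k)) 0.
Proof.
rewrite dotvE sum_mxtens_index; apply: eq_bigr => j _.
rewrite (bigD1 k) //= big1 => [|k' /negbTE k'k]; first by rewrite tens_colE !mxE !eqxx mulr1 addr0.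
by rewrite tens_colE mxE k'k mulr0 conjc0 mul0r.
Qed.

Definition pop (a : 'cV[C]_dO) (x : 'cV[C]_N) : C :=
  \sum_(k < dR) `|dotv (a *t (delta_mx k 0 : 'cV[C]_dR)) x| ^+ 2.

Lemma pop_ge0 a x : 0 <= pop a x.
Proof. by rewrite sumr_ge0 // => k _; rewrite exprn_ge0. Qed.

Lemma dotv_ptraceR_proj a x : dotv a (ptraceR (proj x) *m a) = pop a x.
Proof.
rewrite /pop; under [RHS]eq_bigr do rewrite sqr_normc dotv_tens_delta conjc_sum.
rewrite dotvE; under [LHS]eq_bigr do rewrite mxE big_distrr /=.
under [LHS]eq_bigr do under eq_bigr do rewrite /ptraceR mxE big_distrl big_distrr /=.
under [LHS]eq_bigr do rewrite exchange_big /=; rewrite [LHS]exchange_big /=.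
under [RHS]eq_bigr do rewrite big_distrlr /=.
apply: eq_bigr => k _; apply: eq_bigr => j' _; apply: eq_bigr => j _.
by rewrite projE conjcM conjcK; ring.
Qed.

Lemma pop_tens (a : 'cV[C]_dO) (v : 'cV[C]_dR) : dotv a a = 1 -> pop a (a *t v) = dotv v v.
Proof.
move=> a1; rewrite /pop dotvv; apply: eq_bigr => k _.
by rewrite dotv_tens a1 mul1r dotv_delta.
Qed.

Lemma pop_le_dotv (phi : 'I_dO -> 'cV[C]_dO) l x : onb phi -> pop (phi l) x <= dotv x x.
Proof.
move=> phi_onb.
have basis_onb := onb_tens_reindex phi_onb (@onb_delta R dR) (@mxtens_unindex_bij dO dR).
rewrite -(parseval x basis_onb) sum_mxtens_index (bigD1 l) //.
under [X in _ <= X + _]eq_bigr do rewrite mxtens_indexK.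
rewrite lerDl sumr_ge0 // => l' _.
by rewrite sumr_ge0 // => k _; rewrite exprn_ge0.
Qed.

Lemma sum_pop_unitary a (psi : 'I_N -> 'cV[C]_N) (U : 'M[C]_N) :
  dotv a a = 1 -> onb psi -> unitary U -> \sum_n pop a (U *m psi n) = dR%:R.
Proof.
move=> a1 psi_onb U_unitary; rewrite /pop exchange_big /= -[dR in RHS]card_ord -sumr_const.
apply: eq_bigr => k _; under eq_bigr do rewrite dotv_mulmx dotvC normcJ.
rewrite parseval // dotv_unitary; last exact: unitary_adj.
by rewrite dotv_tens a1 mul1r dotv_delta mxE !eqxx.
Qed.

Lemma tens_spectral (a : 'I_dO -> C) (b : 'I_dR -> C)
    (u : 'I_dO -> 'cV[C]_dO) (v : 'I_dR -> 'cV[C]_dR)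
    (sigma : 'I_N -> 'I_dO * 'I_dR) : bijective sigma ->
  (\sum_l a l *: proj (u l)) *t (\sum_m b m *: proj (v m)) =
  \sum_n (a (sigma n).1 * b (sigma n).2) *: proj (u (sigma n).1 *t v (sigma n).2).
Proof.
move=> sigma_bij; rewrite tensmx_sum pair_big /= (reindex sigma) /=; last exact: onW_bij.
by apply: eq_bigr => n _; rewrite tensmxZ proj_tens.
Qed.

Lemma ptraceR_sum I (r : seq I) (c : I -> C) (A : I -> 'M[C]_N) :
  ptraceR (\sum_(i <- r) c i *: A i) = \sum_(i <- r) c i *: ptraceR (A i).
Proof.
apply/matrixP => j k; rewrite !mxE summxE.
under eq_bigr do rewrite summxE; rewrite exchange_big /=.
by apply: eq_bigr => i _; rewrite !mxE big_distrr /=; apply: eq_bigr => m _; rewrite mxE.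
Qed.

Lemma dotv_ptraceR_spectral (a : 'cV[C]_dO) (U : 'M[C]_N)
    (c : 'I_N -> C) (psi : 'I_N -> 'cV[C]_N) :
  dotv a (ptraceR (U *m (\sum_n c n *: proj (psi n)) *m mxadj U) *m a) =
  \sum_n c n * pop a (U *m psi n).
Proof.
rewrite mulmx_sumr mulmx_suml.
under eq_bigr do rewrite -scalemxAr -scalemxAl proj_mulmx.
rewrite ptraceR_sum mulmx_suml.
under eq_bigr do rewrite -scalemxAl.
by rewrite dotv_sumr; apply: eq_bigr => n _; rewrite dotv_ptraceR_proj.
Qed.

End Marginal.

Theorem lemma1 (R : realType) (dO dR : nat) (hO : (0 < dO)%N) (hR : (0 < dR)%N)
  (lam : 'I_dR -> R) (xi : 'I_dR -> 'cV[R[i]]_dR) (beta : R)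
  (o : 'I_dO -> R) (phi : 'I_dO -> 'cV[R[i]]_dO)
  (sigma : 'I_(dO * dR) -> 'I_dO * 'I_dR) :
  (forall m m' : 'I_dR, (m <= m')%N -> lam m <= lam m') ->
  onb xi ->
  0 < beta ->
  (forall l, 0 <= o l) -> \sum_(l < dO) o l = 1 ->
  (forall l l' : 'I_dO, (l <= l')%N -> o l' <= o l) ->
  onb phi ->
  bijective sigma ->
  let p := fun n : 'I_(dO * dR) =>
    o (sigma n).1 * gibbs_weight lam beta (sigma n).2 in
  let psi := fun n : 'I_(dO * dR) => phi (sigma n).1 *t xi (sigma n).2 in
  (forall n n' : 'I_(dO * dR), (n <= n')%N -> p n' <= p n) ->
  let phi1 := phi (Ordinal hO) in
  let rho := stateO o phi *t thermal lam xi beta in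
  let prob := fun U : 'M[R[i]]_(dO * dR) =>
    (mxadj phi1 *m ptraceR (U *m rho *m mxadj U) *m phi1) 0 0 in
  let pmax := real_complex R (\sum_(n < dO * dR | (n < dR)%N) p n) in
  (forall U, unitary U -> prob U <= pmax) /\
  (exists U, unitary U /\ prob U = pmax) /\
  (forall U, unitary U ->
     (exists xi' : 'I_dR -> 'cV[R[i]]_dR, onb xi' /\
        forall (n : 'I_(dO * dR)) (m : 'I_dR), (n : nat) = m ->
          U *m psi n = phi1 *t xi' m) ->
     prob U = pmax).
Proof.
move=> _ xi_onb _ _ _ _ phi_onb sigma_bij p psi p_noninc phi1 rho prob pmax.
have psi_onb : onb psi := onb_tens_reindex phi_onb xi_onb sigma_bij.
have phi1_unit : dotv phi1 phi1 = 1 by move/onbP: phi_onb => ->; rewrite eqxx.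
have rhoE : rho = \sum_n real_complex R (p n) *: proj (psi n).
  rewrite /rho /stateO /thermal (tens_spectral _ _ _ _ sigma_bij).
  by apply: eq_bigr => n _; rewrite /p [in RHS]rmorphM.
have probE U : prob U = \sum_n real_complex R (p n) * pop phi1 (U *m psi n).
  by rewrite /prob -mulmxA rhoE; exact: dotv_ptraceR_spectral.
have pmaxE : pmax = \sum_(n < dO * dR | (n < dR)%N) real_complex R (p n).
  by rewrite /pmax rmorph_sum.
have pop_sum U : unitary U -> \sum_n pop phi1 (U *m psi n) = dR%:R.
  exact: sum_pop_unitary phi1_unit psi_onb.
have dR_le : (dR <= dO * dR)%N by rewrite leq_pmull.
have attained U : unitary U ->
    (exists xi' : 'I_dR -> 'cV[R[i]]_dR, onb xi' /\
       forall (n : 'I_(dO * dR)) (m : 'I_dR), (n : nat) = m -> U *m psi n = phi1 *t xi' m) ->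
    prob U = pmax.
  move=> U_unitary [xi' [/onbP xi'_onb U_psi]]; rewrite probE pmaxE.
  apply: bathtub_eq => [//|n|//|n n_lt]; [exact: pop_ge0 | exact: pop_sum |].
  by rewrite (U_psi n (Ordinal n_lt)) // pop_tens // xi'_onb eqxx.
split; [|split; last exact: attained].
  move=> U U_unitary; rewrite probE pmaxE; apply: bathtub_le; rewrite ?pop_sum ?hR //.
    by move=> n n' nn'; rewrite lecR p_noninc.
  move=> n; rewrite pop_ge0 (le_trans (pop_le_dotv _ _ phi_onb)) //.
  by rewrite dotv_unitary // (onbP _).1 // eqxx.
have [U U_unitary U_psi] := unitary_onb_map psi_onb
  (onb_tens_reindex phi_onb (@onb_delta _ dR) (@mxtens_unindex_bij dO dR)).
exists U; split => //; apply: attained => //.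
exists (fun m => delta_mx m 0); split; first exact: onb_delta.
by move=> n m nm; rewrite U_psi (@mxtens_unindex0 _ _ (Ordinal hO) m n).
Qed.
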